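(* Let $1\le s\le d$. Natural data $\bar x$ is uniform on $\{-1,1\}^d$; an augmentation $x\sim\mathcal{A}(\bar x)$ is obtained by sampling independent $\tau_{s+1},\dots,\tau_d\sim\mathrm{Unif}[\tfrac12,1]$, multiplying coordinate $j$ of $\bar x$ by $\tau_j$ for $j=s+1,\dots,d$, and keeping the first $s$ coordinates unchanged. Let $p_{\mathrm{data}}$ be the distribution of $x\sim\mathcal{A}(\bar x)$ and $p_{\mathrm{pos}}$ the distribution of $(x,x^+)$ with $x,x^+\sim\mathcal{A}(\bar x)$ independent given a common $\bar x$. Fix $i\in[s]$ and the downstream label $y(x)=\mathrm{sgn}(x_i)$. For $\lambda>0$ let $\mathcal{L}_\lambda(f)=\mathbb{E}_{(x,x^+)\sim p_{\mathrm{pos}}}[\|f(x)-f(x^+)\|_2^2]+\lambda\|\mathbb{E}_{x\sim p_{\mathrm{data}}}[f(x)f(x)^\top]-\mathbb{I}\|_F^2$. (1) Let $k=s$ and $\mathcal{F}_{\mathrm{linear}}=\{x\mapsto Ux: U\in\mathbb{R}^{k\times d}\}$. For any $\lambda>0$ and any $\hat f\in\arg\min_{f\in\mathcal{F}_{\mathrm{linear}}}\mathcal{L}_\lambda(f)$, there exists $w\in\mathbb{R}^k$ with $\mathbb{E}_{x\sim p_{\mathrm{data}}}[(w^\top\hat f(x)-y(x))^2]=0$. (2) Let $\mathcal{F}_{\mathrm{uni}}$ be the class of all functions $\mathbb{R}^d\to\mathbb{R}^k$. If $k\le2^{d-1}$, then there exists $\hat f'\in\arg\min_{f\in\mathcal{F}_{\mathrm{uni}}}\mathcal{L}_\lambda(f)$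 such that every $w\in\mathbb{R}^k$ satisfies $\mathbb{E}_{x\sim p_{\mathrm{data}}}[(w^\top\hat f'(x)-y(x))^2]\ge1$. *)

From HB Require Import structures.
From mathcomp Require Import all_boot all_order all_algebra.
From mathcomp Require Import all_classical all_reals all_analysis.
Set Implicit Arguments. Unset Strict Implicit. Unset Printing Implicit Defensive.
Import Order.TTheory GRing.Theory Num.Theory.
Import numFieldNormedType.Exports.
Local Open Scope classical_set_scope.
Local Open Scope ring_scope.

Section Defs.
Variable R : realType.

Lemma half_lt1 : (2^-1 : R) < 1.
Proof. by rewrite invf_lt1// ltr1n. Qed.

Definition unif_half1 := uniform_prob half_lt1.

(* iterated integral: tau_0, ..., tau_{m-1} i.i.d. Unif[1/2,1];
   tau is a sequence (only the first m entries are used) *)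
Fixpoint iint (m : nat) (F : (nat -> R) -> \bar R) : \bar R :=
  match m with
  | 0 => F (fun _ => 0)
  | m'.+1 => (\int[unif_half1]_t
       iint m' (fun tau => F (fun j => if j is j'.+1 then tau j' else t)))%E
  end.

Definition pm (b : bool) : R := if b then 1 else -1.

(* the augmentation of xbar in {-1,1}^d with scalings tau_{s+1..d}
   (0-indexed: coordinates j >= s are multiplied by tau (j - s)) *)
Definition aug (d s : nat) (xb : {ffun 'I_d -> bool}) (tau : nat -> R) : 'cV[R]_d :=
  \col_j (if (j < s)%N then pm (xb j) else tau (j - s)%N * pm (xb j)).

Definition E_data (d s : nat) (g : 'cV[R]_d -> \bar R) : \bar R :=
  (((2 ^+ d)^-1)%:E *
   \sum_(xb : {ffun 'I_d -> bool}) iint (d - s) (fun tau => g (aug s xb tau)))%E.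

Definition E_pos (d s : nat) (h : 'cV[R]_d -> 'cV[R]_d -> \bar R) : \bar R :=
  (((2 ^+ d)^-1)%:E *
   \sum_(xb : {ffun 'I_d -> bool})
      iint ((d - s) + (d - s)) (fun tau =>
        h (aug s xb tau) (aug s xb (fun j => tau (j + (d - s))%N))))%E.

Definition sqnorm (k : nat) (v : 'cV[R]_k) : R := \sum_a v a 0 ^+ 2.

Definition loss (d s k : nat) (lam : R) (f : 'cV[R]_d -> 'cV[R]_k) : R :=
  fine (E_pos s (fun x x' => (sqnorm (f x - f x'))%:E)) +
  lam * \sum_(a < k) \sum_(b < k)
          (fine (E_data s (fun x => (f x a 0 * f x b 0)%:E)) - (a == b)%:R) ^+ 2.

Definition is_argmin (T : Type) (C : T -> Prop) (L : T -> R) (f : T) : Prop :=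
  C f /\ forall g, C g -> L f <= L g.

Definition F_linear (d k : nat) (f : 'cV[R]_d -> 'cV[R]_k) : Prop :=
  exists U : 'M[R]_(k, d), f = fun x => U *m x.

Definition borel_fun (d k : nat) (f : 'cV[R]_d -> 'cV[R]_k) : Prop :=
  forall V : set 'cV[R]_k, open V -> <<s open >> (f @^-1` V).

(* all (Borel) functions R^d -> R^k for which L_lambda is defined,
   i.e. with finite second moment under p_data *)
Definition F_uni (d s k : nat) (f : 'cV[R]_d -> 'cV[R]_k) : Prop :=
  borel_fun f /\ (E_data s (fun x => (sqnorm (f x))%:E) < +oo)%E.

Definition label (d : nat) (i : 'I_d) (x : 'cV[R]_d) : R := Num.sg (x i 0).

Definition probe_err (d s k : nat) (i : 'I_d) (f : 'cV[R]_d -> 'cV[R]_k)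
    (w : 'cV[R]_k) : \bar R :=
  E_data s (fun x => ((\sum_a w a 0 * f x a 0 - label i x) ^+ 2)%:E).

End Defs.

(* Every expectation in the statement is an average over the 2^d sign
   vectors xbar of an iterated integral over the scalings tau in
   [1/2, 1]^(d-s).  For the feature maps that matter the integrand does not
   depend on tau on that box, so the expectations reduce to averages over xbar of
   the characters chi_S(xbar) = prod_(j in S) xbar_j, which are orthonormal.

   (1) The projection x |-> (x_1, ..., x_s) has loss 0.  A linear map U with
   a nonzero entry in a column j > s has a positive alignment term: matching
   the signs of xbar to that row and taking the scalings of x in [3/4, 1] and
   those of x+ in [1/2, 5/8], which is a box of positive measure, keeps the
   row of U x - U x+ away from 0.  Hence every minimiser vanishes on the
   columns j > s, its loss is lam ||A A^T - I||_F^2 for its left s x s block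
   A, so A is orthogonal and w = A e_i recovers x_i, whose sign is y(x).

   (2) For k distinct sets S_a avoiding i, the continuous map
   x |-> (prod_(j in S_a) clamp(x_j))_a equals (chi_(S_a)(xbar))_a on every
   augmentation of xbar.  It has loss 0, and its coordinates are orthogonal
   to y = chi_{i}, so every linear probe has error at least E[y^2] = 1. *)

From HB Require Import structures.
From mathcomp Require Import all_boot all_order all_algebra.
From mathcomp Require Import all_classical all_reals all_analysis.
From mathcomp Require Import lra.
Set Implicit Arguments. Unset Strict Implicit. Unset Printing Implicit Defensive.
Import Order.TTheory GRing.Theory Num.Theory.
Import numFieldNormedType.Exports.
Local Open Scope classical_set_scope.
Local Open Scope ring_scope.

Section integral_without_measurability.
Context d (T : measurableType d) (R : realType) (mu : {measure set T -> \bar R}).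
Local Open Scope ereal_scope.

Lemma ge0_le_integralT (f g : T -> \bar R) :
  (forall x, 0 <= f x) -> (forall x, f x <= g x) ->
  \int[mu]_x f x <= \int[mu]_x g x.
Proof.
move=> f0 fg; have g0 x : 0 <= g x by apply: le_trans (fg x).
rewrite (ge0_integralTE mu f0) (ge0_integralTE mu g0) /=.
apply: ereal_sup_le => _ [h hf <-]; exists h => //= x.
exact: le_trans (hf x) (fg x).
Qed.

Import HBNNSimple.

Lemma ge0_integral_conull (D : set T) (f : T -> \bar R) :
  measurable D -> mu (~` D) = 0 -> (forall x, 0 <= f x) ->
  \int[mu]_x f x = \int[mu]_(x in D) f x.
Proof.
move=> mD muD f0; apply/eqP; rewrite eq_le; apply/andP; split; last first.
  by rewrite integral_mkcond; apply: ge0_le_integralT => x; rewrite patchE; case: ifP.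
rewrite (ge0_integralTE mu f0) /=; apply: ge_ereal_sup => _ [h hf <-].
rewrite -integralT_nnsfun (@ge0_negligible_integral _ _ _ mu setT (~` D)) //;
  last 3 first.
- exact: measurableC.
- by apply/measurable_realfun.measurable_EFinP; exact: measurable_funTS.
- by move=> x _; rewrite lee_fin.
rewrite setTD setCK integral_mkcond [leRHS]integral_mkcond.
apply: ge0_le_integralT => x; rewrite !patchE; case: ifP => //.
by rewrite lee_fin.
Qed.

Lemma eq_integral_conull (D : set T) (f g : T -> \bar R) :
  measurable D -> mu (~` D) = 0 -> (forall x, D x -> f x = g x) ->
  \int[mu]_x f x = \int[mu]_x g x.
Proof.
move=> mD muD fg; rewrite integralE [in RHS]integralE.
rewrite !(ge0_integral_conull mD muD) //.
by congr (_ - _); apply: eq_integral => x /[1!inE] Dx;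
  rewrite ?funeposE ?funenegE fg.
Qed.

End integral_without_measurability.

Section uniform_half1.
Variable R : realType.
Local Open Scope ereal_scope.
Local Notation U := (@unif_half1 R).

Lemma unif_half1_conull : U (~` `[(2^-1 : R)%R, 1%R]) = 0.
Proof.
by rewrite /unif_half1 /uniform_prob integral_uniform_pdf setICl integral_set0.
Qed.

Lemma eq_unif_half1_integral (f g : R -> \bar R) :
  (forall t, (2^-1 <= t <= 1)%R -> f t = g t) -> \int[U]_t f t = \int[U]_t g t.
Proof.
move=> fg; apply: (eq_integral_conull _ unif_half1_conull) => [|t /=].
  exact: measurable_itv.
by rewrite in_itv /=; exact: fg.
Qed.

Lemma unif_half1_fin_num (A : set R) : measurable A -> U A \is a fin_num.
Proof.
move=> mA; rewrite ge0_fin_numE ?measure_ge0 //.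
by apply: le_lt_trans (probability_le1 U mA) _; rewrite ltry.
Qed.

Lemma unif_half1_itv_gt0 (a b : R) : (2^-1 <= a)%R -> (a < b)%R -> (b <= 1)%R ->
  (0 < fine (U `[a, b]))%R.
Proof.
move=> ha ab hb.
have -> : U `[a, b] = \int[lebesgue_measure]_(x in `[a, b]) cst ((1 - 2^-1)^-1)%:E x.
  apply: eq_integral => x; rewrite inE /= in_itv /= => /andP[xa xb].
  by rewrite /uniform_pdf ifT // (le_trans ha xa) (le_trans xb hb).
rewrite integral_cst //= lebesgue_measure_itv /= lte_fin ab -EFinD -EFinM /=.
by rewrite mulr_gt0 ?subr_gt0 // invr_gt0 subr_gt0 half_lt1.
Qed.

End uniform_half1.

Section iterated_integral.
Variable R : realType.
Local Open Scope ereal_scope.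
Local Notation U := (@unif_half1 R).

Definition supported (m : nat) (tau : nat -> R) :=
  forall j, (j < m)%N -> (2^-1 <= tau j <= 1)%R.

Definition scons (t : R) (tau : nat -> R) : nat -> R :=
  fun j => if j is j'.+1 then tau j' else t.

Lemma iintS m (F : (nat -> R) -> \bar R) :
  iint m.+1 F = \int[U]_t iint m (fun tau => F (scons t tau)).
Proof. by []. Qed.

Lemma supported_scons m t tau :
  (2^-1 <= t <= 1)%R -> supported m tau -> supported m.+1 (scons t tau).
Proof. by move=> ht htau [|j] //= /htau. Qed.

Lemma supported_split m tau :
  supported (m + m) tau -> supported m tau /\ supported m (fun j => tau (j + m)%N).
Proof.
move=> h; split => j jm; apply: h; last by rewrite ltn_add2r.
exact: leq_trans jm (leq_addr _ _).
Qed.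

Lemma iint_ge0 m (F : (nat -> R) -> \bar R) :
  (forall tau, 0 <= F tau) -> 0 <= iint m F.
Proof.
elim: m F => [|m IH] F F0 /=; first exact: F0.
by apply: integral_ge0 => t _; apply: IH.
Qed.

Lemma le_iint m (F G : (nat -> R) -> \bar R) :
  (forall tau, 0 <= F tau) -> (forall tau, F tau <= G tau) -> iint m F <= iint m G.
Proof.
elim: m F G => [|m IH] F G F0 FG /=; first exact: FG.
apply: ge0_le_integralT => t; first exact: iint_ge0.
exact: IH.
Qed.

Lemma eq_iint m (F G : (nat -> R) -> \bar R) :
  (forall tau, supported m tau -> F tau = G tau) -> iint m F = iint m G.
Proof.
elim: m F G => [|m IH] F G FG /=; first exact: FG.
apply: eq_unif_half1_integral => t ht; apply: IH => tau htau.
exact/FG/supported_scons.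
Qed.

Lemma iint_cst m (c : \bar R) : iint m (fun _ => c) = c.
Proof.
elim: m => [|m IH] //=.
by rewrite IH integral_cst //= probability_setT mule1.
Qed.

Lemma iint_supported_cst m (F : (nat -> R) -> \bar R) (c : \bar R) :
  (forall tau, supported m tau -> F tau = c) -> iint m F = c.
Proof. by move=> Fc; rewrite (eq_iint (G := fun _ => c)) ?iint_cst. Qed.

Lemma iint_supported_le m (F : (nat -> R) -> \bar R) (c : R) :
  (forall tau, 0 <= F tau) -> (forall tau, supported m tau -> F tau <= c%:E) ->
  iint m F <= c%:E.
Proof.
move=> F0 Fc; rewrite (eq_iint (G := fun tau => Order.min (F tau) c%:E)); last first.
  by move=> tau /Fc Fle; rewrite min_l.
have c_ge0 : 0 <= c%:E.
  by apply: le_trans (F0 _) (Fc (fun=> 1%R) _) => j _; rewrite lexx ltW ?half_lt1.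
rewrite -[leRHS](iint_cst m); apply: le_iint => tau; last by rewrite ge_min lexx orbT.
by rewrite le_min F0.
Qed.

Lemma iint_prod_indic m (I : nat -> set R) (c : R) :
  (forall j, measurable (I j)) -> (0 <= c)%R ->
  iint m (fun tau => (c * \prod_(j < m) \1_(I j) (tau j))%:E) =
  (c * \prod_(j < m) fine (U (I j)))%:E.
Proof.
elim: m I c => [|m IH] I c mI c0; first by rewrite /= !big_ord0.
rewrite iintS.
transitivity (\int[U]_t ((c * \prod_(j < m) fine (U (I j.+1))) * \1_(I 0%N) t)%:E).
  apply: eq_integral => t _.
  have -> : (fun tau => (c * \prod_(j < m.+1) \1_(I j) (scons t tau j))%:E) =
      (fun tau => ((c * \1_(I 0%N) t) * \prod_(j < m) \1_(I j.+1) (tau j))%:E).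
    by apply: funext => tau; rewrite big_ord_recl mulrA.
  rewrite (IH (fun j => I j.+1)) //; last by rewrite mulr_ge0 // indicE.
  by rewrite mulrAC.
have c'_ge0 : (0 <= c * \prod_(j < m) fine (U (I j.+1)))%R.
  by rewrite mulr_ge0 // prodr_ge0 // => j _; exact/fine_ge0/measure_ge0.
rewrite (integralZl_indic (m := U) measurableT (fun=> I 0%N)) /=; last 2 first.
- by rewrite ltNge c'_ge0.
- exact: mI.
rewrite integral_indic //; last exact: mI.
rewrite (setIT (I 0%N)) -[X in (_ * X)%E = _]fineK; last exact: unif_half1_fin_num.
by rewrite -EFinM big_ord_recl /= -mulrA [(_ * fine _)%R]mulrC.
Qed.

End iterated_integral.

Section characters.
Variables (R : realType) (d : nat).
Local Notation pm := (pm R).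

Lemma pm_negb b : pm (~~ b) = - pm b.
Proof. by case: b; rewrite /pm ?opprK. Qed.

Lemma sqr_pm b : pm b ^+ 2 = 1.
Proof. by case: b; rewrite /pm ?sqrrN expr1n. Qed.

Lemma normr_pm b : `|pm b| = 1.
Proof. by case: b; rewrite /pm ?normrN normr1. Qed.

Definition chi (S : {set 'I_d}) (xb : {ffun 'I_d -> bool}) : R :=
  \prod_(j in S) pm (xb j).

Definition flip (j : 'I_d) (xb : {ffun 'I_d -> bool}) : {ffun 'I_d -> bool} :=
  [ffun l => if l == j then ~~ xb l else xb l].

Lemma flipK j : involutive (flip j).
Proof.
by move=> xb; apply/ffunP => l; rewrite !ffunE; case: eqP => // _; rewrite negbK.
Qed.

Lemma chi_flip S j xb :
  chi S (flip j xb) = (if j \in S then -1 else 1) * chi S xb.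
Proof.
rewrite /chi; case: (boolP (j \in S)) => jS; last first.
  rewrite mul1r; apply: eq_bigr => l lS; rewrite ffunE.
  by case: eqP => // lj; rewrite -lj lS in jS.
rewrite (bigD1 j jS) [in RHS](bigD1 j jS) /= ffunE eqxx pm_negb mulrA mulN1r.
congr (_ * _); apply: eq_bigr => l /andP[_ lj].
by rewrite ffunE (negbTE lj).
Qed.

Lemma sqr_chi S xb : chi S xb ^+ 2 = 1.
Proof. by rewrite -prodrXl; apply: big1 => j _; exact: sqr_pm. Qed.

(* Flipping a coordinate of the symmetric difference of [S] and [T]
   changes the sign of [chi S * chi T]. *)
Lemma sum_chiM S T :
  \sum_(xb : {ffun 'I_d -> bool}) chi S xb * chi T xb = (2 ^ d)%:R * (S == T)%:R.
Proof.
have [<-|ST] := eqVneq S T.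
  under eq_bigr do rewrite -expr2 sqr_chi.
  by rewrite sumr_const card_ffun card_bool card_ord mulr1.
have [j STj] : exists j, (j \in S) != (j \in T).
  apply/existsP; move: ST; apply: contraNT => /existsPn STeq.
  by apply/eqP/setP => j; apply/eqP; rewrite -[_ == _]negbK STeq.
set F := fun xb => chi S xb * chi T xb.
have FN xb : F (flip j xb) = - F xb.
  by rewrite /F !chi_flip; move: STj; case: (j \in S); case: (j \in T) => //= _;
    rewrite mulN1r mul1r ?mulNr ?mulrN.
have : \sum_xb F xb = - \sum_xb F xb.
  rewrite {1}(reindex_inj (can_inj (flipK j))) /= -sumrN.
  by apply: eq_bigr => xb _; rewrite FN.
by rewrite mulr0 => sumFN; lra.
Qed.

Lemma sum_pmM j l :
  \sum_(xb : {ffun 'I_d -> bool}) pm (xb j) * pm (xb l) = (2 ^ d)%:R * (j == l)%:R.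
Proof.
have chi1 i xb : chi [set i] xb = pm (xb i) by rewrite /chi big_set1.
under eq_bigr do rewrite -!chi1.
by rewrite sum_chiM (inj_eq set1_inj).
Qed.

End characters.

Lemma sum_sqr_subr_ge (I : finType) (R : realDomainType) (W Y : I -> R) :
  \sum_x W x * Y x = 0 -> \sum_x Y x ^+ 2 <= \sum_x (W x - Y x) ^+ 2.
Proof.
move=> WY0.
have -> : \sum_x (W x - Y x) ^+ 2 = \sum_x W x ^+ 2 + \sum_x Y x ^+ 2.
  under eq_bigr do rewrite sqrrB.
  by rewrite !big_split /= sumrN sumrMnl WY0 mul0rn subr0.
by rewrite lerDr sumr_ge0 // => x _; exact: sqr_ge0.
Qed.

Lemma sum_sqr_mx_eq0 (R : realDomainType) m n (M : 'M[R]_(m, n)) :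
  \sum_a \sum_b M a b ^+ 2 = 0 -> M = 0.
Proof.
move=> M0; apply/matrixP => a b; rewrite mxE; apply/eqP; rewrite -sqrf_eq0.
have row0 := psumr_eq0P (fun a _ => sumr_ge0 _ (fun b _ => sqr_ge0 (M a b))) M0.
by rewrite (psumr_eq0P (fun b _ => sqr_ge0 (M a b)) (row0 a isT)).
Qed.

Section augmentation.
Variables (R : realType) (d s : nat).
Local Notation m := (d - s)%N.

Lemma aug_head xb (tau : nat -> R) (j : 'I_d) :
  (j < s)%N -> aug s xb tau j 0 = pm R (xb j).
Proof. by move=> js; rewrite mxE js. Qed.

Lemma aug_tail xb (tau : nat -> R) (j : 'I_d) :
  (s <= j)%N -> aug s xb tau j 0 = tau (j - s)%N * pm R (xb j).
Proof. by move=> sj; rewrite mxE ltnNge sj. Qed.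

Lemma supported_tail (tau : nat -> R) (j : 'I_d) :
  supported m tau -> (s <= j)%N -> (2^-1 <= tau (j - s)%N <= 1)%R.
Proof. by move=> htau sj; apply: htau; rewrite ltn_sub2r // (leq_ltn_trans sj). Qed.

Lemma label_aug (i : 'I_d) xb (tau : nat -> R) :
  (i < s)%N -> label i (aug s xb tau) = pm R (xb i).
Proof.
by move=> is_; rewrite /label aug_head //; case: (xb i); rewrite ?sgr1 ?sgrN1.
Qed.

End augmentation.

Section expectations.
Variables (R : realType) (d s : nat).
Local Notation m := (d - s)%N.
Local Open Scope ereal_scope.

Lemma E_data_supported_cst (g : 'cV[R]_d -> \bar R)
    (c : {ffun 'I_d -> bool} -> R) :
  (forall xb tau, supported m tau -> g (aug s xb tau) = (c xb)%:E) ->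
  E_data s g = ((2 ^+ d)^-1 * \sum_xb c xb)%:E.
Proof.
move=> gc; rewrite /E_data (eq_bigr (fun xb => (c xb)%:E)) ?sumEFin //.
by move=> xb _; apply: iint_supported_cst => tau /gc.
Qed.

Lemma E_pos_supported_cst (h : 'cV[R]_d -> 'cV[R]_d -> \bar R)
    (c : {ffun 'I_d -> bool} -> R) :
  (forall xb tau tau', supported m tau -> supported m tau' ->
     h (aug s xb tau) (aug s xb tau') = (c xb)%:E) ->
  E_pos s h = ((2 ^+ d)^-1 * \sum_xb c xb)%:E.
Proof.
move=> hc; rewrite /E_pos (eq_bigr (fun xb => (c xb)%:E)) ?sumEFin //.
by move=> xb _; apply: iint_supported_cst => tau /supported_split[]; exact: hc.
Qed.

Lemma E_pos_ge0 (h : 'cV[R]_d -> 'cV[R]_d -> \bar R) :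
  (forall x y, 0 <= h x y) -> 0 <= E_pos s h.
Proof.
move=> h0; rewrite /E_pos mule_ge0 ?lee_fin ?invr_ge0 ?exprn_ge0 //.
by apply: sume_ge0 => xb _; apply: iint_ge0.
Qed.

Lemma sqnorm_ge0 k (v : 'cV[R]_k) : (0 <= sqnorm v)%R.
Proof. by apply: sumr_ge0 => a _; exact: sqr_ge0. Qed.

Lemma loss_ge0 k (lam : R) (f : 'cV[R]_d -> 'cV[R]_k) :
  (0 <= lam)%R -> (0 <= loss s lam f)%R.
Proof.
move=> lam0; rewrite /loss addr_ge0 ?mulr_ge0 //.
  by apply/fine_ge0/E_pos_ge0 => x y; rewrite lee_fin sqnorm_ge0.
by do 2!(apply: sumr_ge0 => ? _); exact: sqr_ge0.
Qed.

End expectations.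

Section clamp.
Variable R : realType.

(* [clamp t = max (-1) (min 1 (2 t))], written with norms to make
   continuity immediate *)
Definition clamp (t : R) : R := 2^-1 * (`|t *+ 2 + 1| - `|t *+ 2 - 1|).

Lemma continuous_clamp : continuous clamp.
Proof.
have cont_affine (c : R) : continuous (fun u : R => u *+ 2 + c).
  move=> u; apply: (continuousD (f := fun u : R => u *+ 2) (g := cst c)).
    exact: natmul_continuous.
  exact: cst_continuous.
have cont_norm (c : R) : continuous (fun u : R => `|u *+ 2 + c|).
  move=> u.
  apply: (continuous_comp (f := fun u : R => u *+ 2 + c) (g := Num.norm)).
    exact: cont_affine.
  exact: norm_continuous.
have -> : clamp =
    cst 2^-1 \* ((fun u => `|u *+ 2 + 1|) \- (fun u => `|u *+ 2 - 1|)) by [].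
move=> t; apply: continuousM; first exact: cst_continuous.
by apply: continuousB; [exact: cont_norm | exact: (cont_norm (- 1))].
Qed.

Lemma clamp_pm (tau : R) b : 2^-1 <= tau <= 1 -> clamp (tau * pm R b) = pm R b.
Proof.
move=> /andP[tau_ge tau_le]; have tau2 : 1 <= tau *+ 2.
  by rewrite -mulr_natr -ler_pdivrMr // div1r.
rewrite /clamp /pm; case: b.
  by rewrite mulr1 !ger0_norm; lra.
by rewrite mulrN1 mulNrn !ler0_norm; lra.
Qed.

Lemma clamp_aug d s xb (tau : nat -> R) (j : 'I_d) :
  supported (d - s) tau -> clamp (aug s xb tau j 0) = pm R (xb j).
Proof.
move=> htau; case: (ltnP j s) => js.
  by rewrite aug_head // -{1}[pm _ _]mul1r clamp_pm // lexx ltW ?half_lt1.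
by rewrite aug_tail // clamp_pm // supported_tail.
Qed.

End clamp.

Section clamped_characters.
Variables (R : realType) (d : nat).

Definition clamp_chi (S : {set 'I_d}) (x : 'cV[R]_d) : R :=
  \prod_(j in S) clamp (x j 0).

Lemma continuous_clamp_chi S : continuous (clamp_chi S).
Proof.
apply: (@continuous_big R _ *%R 1 (mem S) (@mul_continuous R)) => j _ x.
apply: (continuous_comp (f := fun y : 'cV[R]_d => y j 0) (g := @clamp R)).
  exact: coord_continuous.
exact: continuous_clamp.
Qed.

Lemma clamp_chi_aug S s xb tau :
  supported (d - s) tau -> clamp_chi S (aug s xb tau) = chi R S xb.
Proof. by move=> htau; apply: eq_bigr => j _; exact: clamp_aug. Qed.

Lemma continuous_col k (g : 'cV[R]_d -> 'I_k -> R) :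
  (forall a, continuous (g ^~ a)) -> continuous (fun x => \col_a g x a : 'cV[R]_k).
Proof.
move=> gc x A /nbhs_ballP [e e0 eA].
have : \forall y \near x, forall a, ball (g x a) e (g y a).
  apply: (@filter_forall _ _ (fun a y => ball (g x a) e (g y a)) (nbhs x) _) => a.
  exact/gc/nbhsx_ballx.
by apply: filterS => y gy; apply: eA; split => // a j; rewrite !mxE; exact: gy.
Qed.

Lemma sets_avoiding k (i : 'I_d) : (k <= 2 ^ (d - 1))%N ->
  exists e : 'I_k -> {set 'I_d}, injective e /\ forall a, i \notin e a.
Proof.
move=> k_le; set A := powerset [set~ i].
have kA : (k <= #|A|)%N by rewrite card_powerset cardsC1 card_ord -subn1.
exists (fun a => enum_val (widen_ord kA a)); split.
  by move=> a b /enum_val_inj /(congr1 val) /= ab; apply: val_inj.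
move=> a; have := enum_valP (widen_ord kA a).
rewrite powersetE => /fintype.subsetP sub.
by apply/negP => /sub; rewrite !inE eqxx.
Qed.

End clamped_characters.

Section character_features_loss.
Variables (R : realType) (d s k : nat) (e : 'I_k -> {set 'I_d}).

Definition char_features (x : 'cV[R]_d) : 'cV[R]_k := \col_a clamp_chi (e a) x.

Lemma char_features_aug xb tau a :
  supported (d - s) tau -> char_features (aug s xb tau) a 0 = chi R (e a) xb.
Proof. by move=> htau; rewrite mxE clamp_chi_aug. Qed.

Lemma F_uni_char_features : F_uni s char_features.
Proof.
split.
  move=> V oV; apply: sub_sigma_algebra; apply: open_comp => // x _.
  by apply: continuous_col => a; exact: continuous_clamp_chi.
rewrite (@E_data_supported_cst _ _ _ _ (fun=> k%:R)) ?ltry // => xb tau htau.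
rewrite /sqnorm (eq_bigr (fun=> 1)) ?sumr_const ?card_ord // => a _.
by rewrite char_features_aug // sqr_chi.
Qed.

Lemma loss_char_features (lam : R) : injective e -> loss s lam char_features = 0.
Proof.
move=> e_inj; rewrite /loss (@E_pos_supported_cst _ _ _ _ (fun=> 0)); last first.
  move=> xb tau tau' htau htau'; rewrite /sqnorm big1 // => a _.
  by rewrite !mxE !clamp_chi_aug // subrr expr0n.
rewrite big1 // mulr0 add0r big1 ?mulr0 // => a _; apply: big1 => b _.
rewrite (@E_data_supported_cst _ _ _ _ (fun xb => chi R (e a) xb * chi R (e b) xb)).
  rewrite /= sum_chiM natrX mulKf ?expf_neq0 ?pnatr_eq0 //.
  by rewrite (inj_eq e_inj) subrr expr0n.
by move=> xb tau htau; rewrite !char_features_aug.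
Qed.

Lemma probe_err_char_features_ge1 (i : 'I_d) (w : 'cV[R]_k) :
  (i < s)%N -> (forall a, i \notin e a) -> (1%:E <= probe_err s i char_features w)%E.
Proof.
move=> is_ ei; set W := fun xb => \sum_a w a 0 * chi R (e a) xb.
rewrite /probe_err (@E_data_supported_cst _ _ _ _
  (fun xb => (W xb - pm R (xb i)) ^+ 2)); last first.
  move=> xb tau htau; rewrite label_aug //; congr (EFin ((_ - _) ^+ 2)).
  by apply: eq_bigr => a _; rewrite char_features_aug.
have chi_i (xb : {ffun 'I_d -> bool}) : pm R (xb i) = chi R [set i] xb.
  by rewrite /chi big_set1.
have WY : \sum_(xb : {ffun 'I_d -> bool}) W xb * pm R (xb i) = 0.
  under eq_bigr do rewrite mulr_suml.
  rewrite exchange_big big1 //= => a _.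
  under eq_bigr do rewrite -mulrA chi_i.
  rewrite -mulr_sumr sum_chiM.
  by case: eqP => [eai|]; rewrite ?mulr0 //; have := ei a; rewrite eai inE eqxx.
rewrite lee_fin ler_pdivlMl ?exprn_gt0 // mulr1 -natrX.
apply: le_trans (sum_sqr_subr_ge WY).
by under eq_bigr do rewrite sqr_pm; rewrite sumr_const card_ffun card_bool card_ord.
Qed.

End character_features_loss.

Section tail_free_features.
Variables (R : realType) (d s : nat).
Hypothesis le_sd : (s <= d)%N.
Local Notation head U := (colsub (widen_ord le_sd) U).

Definition tail_free k (U : 'M[R]_(k, d)) :=
  forall a (j : 'I_d), (s <= j)%N -> U a j = 0.

Definition signs (xb : {ffun 'I_d -> bool}) : 'cV[R]_s :=
  \col_j pm R (xb (widen_ord le_sd j)).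

Lemma tail_free_mul_aug k (U : 'M[R]_(k, d)) xb tau :
  tail_free U -> U *m aug s xb tau = head U *m signs xb.
Proof.
move=> tfU; apply/matrixP => a b; rewrite (ord1 b) !mxE.
transitivity (\sum_(j < d | (j < s)%N) U a j * aug s xb tau j 0).
  rewrite [RHS]big_mkcond /=; apply: eq_bigr => j _.
  by case: ltnP => // sj; rewrite tfU ?mul0r.
rewrite (big_ord_narrow le_sd); apply: eq_bigr => j _.
by rewrite aug_head ?mxE //; exact: (ltn_ord j).
Qed.

Lemma sum_signsM j l :
  \sum_xb signs xb j 0 * signs xb l 0 = (2 ^ d)%:R * (j == l)%:R.
Proof. by under eq_bigr do rewrite !mxE; rewrite sum_pmM. Qed.

Lemma avg_signs_gram k (A : 'M[R]_(k, s)) a b :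
  (2 ^+ d)^-1 * \sum_xb (A *m signs xb) a 0 * (A *m signs xb) b 0 = (A *m A^T) a b.
Proof.
have sum_xb j l : \sum_xb (A a j * signs xb j 0) * (A b l * signs xb l 0) =
    A a j * A b l * ((2 ^ d)%:R * (j == l)%:R).
  by under eq_bigr do rewrite mulrACA; rewrite -mulr_sumr sum_signsM.
under eq_bigr do rewrite !mxE big_distrlr /=.
rewrite exchange_big mulr_sumr mxE; apply: eq_bigr => j _ /=.
rewrite exchange_big /= (bigD1 j) //= [X in _ + X]big1 => [|l lj]; last first.
  by rewrite sum_xb eq_sym (negbTE lj) !mulr0.
rewrite sum_xb eqxx mulr1 addr0 natrX mulrCA mulVf ?expf_neq0 ?pnatr_eq0 //.
by rewrite mulr1 mxE.
Qed.

Lemma loss_tail_free k (U : 'M[R]_(k, d)) (lam : R) : tail_free U ->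
  loss s lam (fun x => U *m x) =
  lam * \sum_a \sum_b ((head U *m (head U)^T) a b - (a == b)%:R) ^+ 2.
Proof.
move=> tfU; rewrite /loss (@E_pos_supported_cst _ _ _ _ (fun=> 0)); last first.
  move=> xb tau tau' _ _; rewrite !tail_free_mul_aug // subrr /sqnorm.
  by rewrite big1 // => a _; rewrite mxE expr0n.
rewrite big1 // mulr0 add0r; congr (lam * _); apply: eq_bigr => a _.
apply: eq_bigr => b _; rewrite -avg_signs_gram (@E_data_supported_cst _ _ _ _
  (fun xb => (head U *m signs xb) a 0 * (head U *m signs xb) b 0)) //.
by move=> xb tau _; rewrite tail_free_mul_aug.
Qed.

Definition proj_head : 'M[R]_(s, d) := \matrix_(a, j) (a == j :> nat)%:R.

Lemma tail_free_proj_head : tail_free proj_head.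
Proof.
move=> a j sj; rewrite mxE; case: eqP => // aj.
by move: (ltn_ord a); rewrite aj ltnNge sj.
Qed.

Lemma head_proj_head : head proj_head = 1%:M.
Proof. by apply/matrixP => a j; rewrite !mxE. Qed.

Lemma loss_proj_head (lam : R) : loss s lam (fun x => proj_head *m x) = 0.
Proof.
rewrite loss_tail_free; last exact: tail_free_proj_head.
rewrite head_proj_head trmx1 mulmx1.
by rewrite big1 ?mulr0 // => a _; apply: big1 => b _; rewrite mxE subrr expr0n.
Qed.

Lemma gram_head_of_loss_le0 k (U : 'M[R]_(k, d)) (lam : R) :
  0 < lam -> tail_free U -> loss s lam (fun x => U *m x) <= 0 ->
  head U *m (head U)^T = 1%:M.
Proof.
move=> lam0 tfU; rewrite loss_tail_free // pmulr_rle0 // => S_le0.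
apply/eqP; rewrite -subr_eq0; apply/eqP/sum_sqr_mx_eq0.
apply/eqP; rewrite eq_le (le_trans _ S_le0) /=; last first.
  by apply: ler_sum => a _; apply: ler_sum => b _; rewrite !mxE.
by apply: sumr_ge0 => a _; apply: sumr_ge0 => b _; exact: sqr_ge0.
Qed.

(* [A A^T = 1] gives [A^T A = 1], so the probe [w = A e_i] reads off [x_i]. *)
Lemma probe_err_orthogonal_head (U : 'M[R]_(s, d)) (i : 'I_d) (is_ : (i < s)%N) :
  tail_free U -> head U *m (head U)^T = 1%:M ->
  probe_err s i (fun x => U *m x) (head U *m delta_mx (Ordinal is_) 0) = 0%:E.
Proof.
move=> tfU AAt; have AtA := mulmx1C AAt; set e_i := delta_mx _ _.
rewrite /probe_err (@E_data_supported_cst _ _ _ _ (fun=> 0)) ?big1 ?mulr0 //.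
move=> xb tau _; rewrite label_aug // tail_free_mul_aug //.
have -> : \sum_a (head U *m e_i) a 0 * (head U *m signs xb) a 0 =
    ((head U *m e_i)^T *m (head U *m signs xb)) 0 0.
  by rewrite !mxE; apply: eq_bigr => a _; rewrite !mxE.
rewrite trmx_mul trmx_delta mulmxA -(mulmxA _ _ (head U)) AtA mulmx1 -rowE !mxE.
have -> : widen_ord le_sd (Ordinal is_) = i by apply: val_inj.
by rewrite subrr expr0n.
Qed.

End tail_free_features.

Section alignment_term.
Variables (R : realType) (d s k : nat) (U : 'M[R]_(k, d)).
Local Notation m := (d - s)%N.
Local Notation align_err :=
  (fun x x' : 'cV[R]_d => (sqnorm (U *m x - U *m x'))%:E).

Lemma mul_aug_subr_entry xb (tau tau' : nat -> R) a :
  (U *m aug s xb tau - U *m aug s xb tau') a 0 =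
  \sum_(j < d) (if (s <= j)%N
                then U a j * pm R (xb j) * (tau (j - s)%N - tau' (j - s)%N)
                else 0).
Proof.
rewrite !mxE -sumrB; apply: eq_bigr => j _.
case: ltnP => js; first by rewrite !aug_head // subrr.
by rewrite !aug_tail // -mulrBr -mulrBl mulrA mulrAC.
Qed.

Lemma sqnorm_mul_aug_subr_le xb (tau tau' : nat -> R) :
  supported m tau -> supported m tau' ->
  sqnorm (U *m aug s xb tau - U *m aug s xb tau') <= \sum_a (\sum_j `|U a j|) ^+ 2.
Proof.
move=> htau htau'; apply: ler_sum => a _; rewrite mul_aug_subr_entry.
set x := \sum_j _; set b := \sum_j _.
have x_le : `|x| <= b.
  apply: le_trans (ler_norm_sum _ _ _) (ler_sum _ _) => j _.
  case: ifP => sj; last by rewrite normr0.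
  have /andP[t_ge t_le] := supported_tail htau sj.
  have /andP[t'_ge t'_le] := supported_tail htau' sj.
  rewrite !normrM normr_pm mulr1 -[leRHS]mulr1 ler_wpM2l // ler_norml.
  by apply/andP; split; lra.
have b_ge0 : 0 <= b by apply: le_trans x_le.
by move: x_le; rewrite ler_norml => /andP[]; nra.
Qed.

Lemma E_pos_linear_fin_num : E_pos s align_err \is a fin_num.
Proof.
rewrite /E_pos fin_numM //; apply/sum_fin_numP => xb _ _.
rewrite ge0_fin_numE; last by apply: iint_ge0 => tau; rewrite lee_fin sqnorm_ge0.
apply: le_lt_trans (ltry (\sum_a (\sum_j `|U a j|) ^+ 2)).
apply: iint_supported_le => [tau|tau /supported_split[htau htau']].
  by rewrite lee_fin sqnorm_ge0.
by rewrite lee_fin sqnorm_mul_aug_subr_le.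
Qed.

Definition hi_lo (l : nat) : set R :=
  if (l < m)%N then `[3/4, 1]%classic else `[2^-1, 5/8]%classic.

Definition sign_pattern a : {ffun 'I_d -> bool} := [ffun j => 0 <= U a j].

(* Every tail column [j] contributes at least [|U a j| / 8]: [xb] matches
   the sign of [U a j], and the scalings of [x] and [x+] differ by at least
   [3/4 - 5/8 = 1/8]. *)
Lemma mul_aug_subr_box_ge a (j0 : 'I_d) (tau : nat -> R) :
  (s <= j0)%N -> (forall l, (l < m + m)%N -> tau l \in hi_lo l) ->
  `|U a j0| / 8 <= (U *m aug s (sign_pattern a) tau -
                    U *m aug s (sign_pattern a) (fun j => tau (j + m)%N)) a 0.
Proof.
move=> sj0 tau_box.
have term_ge (j : 'I_d) : (if (s <= j)%N then `|U a j| / 8 else 0) <=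
    (if (s <= j)%N then U a j * pm R (sign_pattern a j) *
       (tau (j - s)%N - tau (j - s + m)%N) else 0).
  case: ifP => // sj; have js_lt : (j - s < m)%N.
    by rewrite ltn_sub2r // (leq_ltn_trans sj).
  have t_in := tau_box _ (ltn_addr m js_lt).
  have t'_in := tau_box (j - s + m)%N ltac:(by rewrite ltn_add2r).
  move: t_in t'_in; rewrite /hi_lo js_lt ltnNge leq_addl /= !in_setE /= !in_itv /=.
  move=> /andP[t_ge t_le] /andP[t'_ge t'_le].
  have -> : U a j * pm R (sign_pattern a j) = `|U a j|.
    rewrite ffunE /pm; case: leP => [/ger0_norm|/ltr0_norm] ->.
      by rewrite mulr1.
    by rewrite mulrN1.
  by rewrite ler_wpM2l //; lra.
rewrite mul_aug_subr_entry; apply: (le_trans _ (ler_sum _ (fun j _ => term_ge j))).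
rewrite (bigD1 j0) //= sj0 lerDl; apply: sumr_ge0 => j _.
by case: ifP => // _; rewrite divr_ge0.
Qed.

Lemma box_indic_le a (j0 : 'I_d) (tau : nat -> R) : (s <= j0)%N ->
  (`|U a j0| / 8) ^+ 2 * \prod_(l < m + m) \1_(hi_lo l) (tau l) <=
  sqnorm (U *m aug s (sign_pattern a) tau -
          U *m aug s (sign_pattern a) (fun j => tau (j + m)%N)).
Proof.
move=> sj0.
have [tau_box|] := boolP [forall l : 'I_(m + m), tau l \in hi_lo l]; last first.
  move=> /forallPn[l l_out]; rewrite (bigD1 l) //= indicE (negbTE l_out) mul0r mulr0.
  exact: sqnorm_ge0.
rewrite big1 ?mulr1 => [|l _]; last by rewrite indicE (forallP tau_box l).
have := @mul_aug_subr_box_ge a j0 tau sj0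
  (fun l lt_l => forallP tau_box (Ordinal lt_l)).
rewrite /sqnorm (bigD1 a) //=; set x := (_ a 0); set rest := \sum_(i | _) _ => x_ge.
have : 0 <= rest by apply: sumr_ge0 => ? _; exact: sqr_ge0.
have : 0 <= `|U a j0| / 8 by rewrite divr_ge0.
nra.
Qed.

Lemma E_pos_linear_gt0 a (j0 : 'I_d) : (s <= j0)%N -> U a j0 != 0 ->
  0 < fine (E_pos s align_err).
Proof.
move=> sj0 Uaj0; apply: fine_gt0; apply/andP; split; last first.
  by move: E_pos_linear_fin_num; rewrite fin_numE ltey => /andP[].
rewrite /E_pos mule_gt0 ?lte_fin ?invr_gt0 ?exprn_gt0 //.
rewrite (bigD1 (sign_pattern a)) //=; apply: lt_le_trans (leeDl _ _); last first.
  by apply: sume_ge0 => xb _; apply: iint_ge0 => tau; rewrite lee_fin sqnorm_ge0.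
apply: (@lt_le_trans _ _ (iint (m + m) (fun tau =>
  ((`|U a j0| / 8) ^+ 2 * \prod_(l < m + m) \1_(hi_lo l) (tau l))%:E))).
  rewrite iint_prod_indic ?sqr_ge0 // => [|l]; last by rewrite /hi_lo; case: ifP.
  rewrite lte_fin mulr_gt0 ?exprn_gt0 ?divr_gt0 ?normr_gt0 //.
  apply: prodr_gt0 => l _; rewrite /hi_lo; case: ifP => _.
    by apply: unif_half1_itv_gt0; lra.
  by apply: unif_half1_itv_gt0; lra.
apply: le_iint => tau; rewrite lee_fin ?box_indic_le //.
by rewrite mulr_ge0 ?sqr_ge0 // prodr_ge0 // => l _; rewrite indicE.
Qed.

Lemma tail_free_of_loss_le0 (lam : R) : 0 <= lam ->
  loss s lam (fun x => U *m x) <= 0 -> tail_free s U.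
Proof.
move=> lam0 loss_le0 a j sj; apply/eqP; apply: contraTT loss_le0 => Uaj.
rewrite -ltNge; apply: lt_le_trans (E_pos_linear_gt0 sj Uaj) _.
rewrite /loss lerDl mulr_ge0 //.
by do 2!(apply: sumr_ge0 => ? _); exact: sqr_ge0.
Qed.

End alignment_term.

Unset Implicit Arguments. Set Strict Implicit. Set Printing Implicit Defensive.
Local Close Scope classical_set_scope.

Theorem theorem4 (R : realType) (d s : nat) (i : 'I_d) :
  (1 <= s <= d)%N -> (i < s)%N ->
  (forall (lam : R), 0 < lam ->
     forall fh : 'cV[R]_d -> 'cV[R]_s,
       is_argmin (@F_linear R d s) (loss s lam) fh ->
       exists w : 'cV[R]_s, probe_err s i fh w = 0%:E)
  /\
  (forall (k : nat) (lam : R), 0 < lam -> (k <= 2 ^ (d - 1))%N ->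
     exists fh : 'cV[R]_d -> 'cV[R]_k,
       is_argmin (@F_uni R d s k) (loss s lam) fh /\
       forall w : 'cV[R]_k, (1%:E <= probe_err s i fh w)%E).
Proof.
move=> /andP[_ le_sd] is_; split.
  move=> lam lam0 _ [[U ->] U_min].
  have loss_le0 : loss s lam (fun x => U *m x) <= 0.
    by rewrite -(loss_proj_head le_sd lam); apply: U_min; exists (proj_head R d s).
  have tfU := tail_free_of_loss_le0 (ltW lam0) loss_le0.
  exists (colsub (widen_ord le_sd) U *m delta_mx (Ordinal is_) 0).
  exact/probe_err_orthogonal_head/(gram_head_of_loss_le0 le_sd lam0 tfU loss_le0).
move=> k lam lam0 k_le; have [e [e_inj e_i]] := sets_avoiding i k_le.
exists (char_features e); split; last by move=> w; exact: probe_err_char_features_ge1.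
split; first exact: F_uni_char_features.
by move=> g _; rewrite loss_char_features // loss_ge0 // ltW.
Qed.
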